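(* Let $\boldsymbol{d}$ be a graphical degree sequence with minimum degree at least $3$. Let $(G,H)$ be a switch on $\mathcal{G}(n,\boldsymbol{d})$ which removes the edges $a_1a_2,a_3a_4$ and inserts the edges $a_1a_3,a_2a_4$, and let $D=\{a_1,a_2,a_3,a_4\}$. Suppose that all of the following hold: neither of the diagonals $a_1a_4$, $a_2a_3$ is an edge of $G$; no pair of vertices in $D$ has a common neighbour in $G$; and there is no triangle in $G$ on vertices $a_j,u,w$ with $j\in[4]$ and $\{u,w\}\cap D=\emptyset$. Then there is a triangle-switch simulation path of length at most $5$ from $G$ to $H$.
   Context: $\mathcal{G}(n,\boldsymbol{d})$ is the set of labelled simple graphs on $[n]$ with vertex $i$ of degree $d_i$. A switch $(G,H)$ on $\mathcal{G}(n,\boldsymbol{d})$: $G\in\mathcal{G}(n,\boldsymbol{d})$, $F$ is a set of two vertex-disjoint edges of $G$ on vertex set $\{a_1,a_2,a_3,a_4\}$, $F'$ is a different perfect matching of these four vertices with $F'\cap(E(G)\setminus F)=\emptyset$, and $H$ has edge set $(E(G)\setminus F)\cup F'$. A triangle switch is a switch $(G,H)$ such that for some pair $aa'\in F\cup F'$, $a$ and $a'$ have a common neighbour in $G$ outside $\{a_1,a_2,a_3,a_4\}$. A triangle-switch simulation path of length $\kappa$ from $G$ to $H$ is a sequence $G=X_0,X_1,\dots,X_\kappa=H$ of graphs in $\mathcal{G}(n,\boldsymbol{d})$ such that each $(X_i,X_{i+1})$ is a triangle switch. *)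

From mathcomp Require Import all_boot.

Set Implicit Arguments. Unset Strict Implicit. Unset Printing Implicit Defensive.

(* A labelled simple graph on [n] = 'I_n is given by its edge set:
   a set of 2-element subsets of 'I_n. *)
Definition graph (n : nat) := {set {set 'I_n}}.

Definition is_simple n (G : graph n) : bool :=
  [forall e in G, #|e| == 2].

Definition adj n (G : graph n) (x y : 'I_n) : bool :=
  (x != y) && ([set x; y] \in G).

Definition deg n (G : graph n) (i : 'I_n) : nat :=
  #|[set e in G | i \in e]|.

Definition in_Gnd n (d : 'I_n -> nat) (G : graph n) : Prop :=
  is_simple G /\ forall i, deg G i = d i.

Definition graphical n (d : 'I_n -> nat) : Prop := exists G, in_Gnd d G.

Definition switch_via n (d : 'I_n -> nat) (G H : graph n)
    (F F' : {set {set 'I_n}}) : Prop :=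
  [/\ in_Gnd d G /\ in_Gnd d H,
      [/\ F \subset G, #|F| = 2, trivIset F & #|cover F| = 4],
      [/\ partition F' (cover F), [forall e in F', #|e| == 2] & F' != F],
      F' :&: (G :\: F) = set0
    & H = (G :\: F) :|: F'].

Definition is_switch n (d : 'I_n -> nat) (G H : graph n) : Prop :=
  exists F F', switch_via d G H F F'.

Definition is_triangle_switch n (d : 'I_n -> nat) (G H : graph n) : Prop :=
  exists F F', switch_via d G H F F' /\
    exists e, e \in F :|: F' /\
      exists v, v \notin cover F /\ forall x, x \in e -> adj G x v.

Definition tsim_path n (d : 'I_n -> nat) (G H : graph n) (kappa : nat) : Prop :=
  exists X : nat -> graph n,
    [/\ X 0 = G, X kappa = H,
        forall i, i <= kappa -> in_Gnd d (X i)
      & forall i, i < kappa -> is_triangle_switch d (X i) (X i.+1)].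

(* No pair of D has a common neighbour in G, so triangles must first be created
   near a1.  By minimum degree 3, a1 has two neighbours x, x' other than a2; the
   hypotheses force them to lie outside D, to be nonadjacent and to have a1 as
   their only neighbour in D, and every neighbour y <> a1 of x to lie outside D
   and to be nonadjacent to a1.  Four triangle switches then suffice:
   - if some path x y v with y <> a1 and v <> x, x' has x'v a non-edge, the
     switch a1x',yv -> a1y,x'v (witness x) creates the triangle a1xy, which
     witnesses a1x,a3a4 -> a1a3,xa4 and a1a2,xa4 -> a1x,a2a4; undoing the first
     switch (witness x) ends the path;
   - otherwise every such v is adjacent to x', and symmetrically with x and x'
     exchanged; this yields a 4-cycle x y t h with xt a non-edge, and the path
     a1x,yt -> a1y,xt; a4a3,xt -> a4x,a3t; a1a2,xa4 -> a1x,a2a4;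
     a1y,a3t -> a1a3,yt has witnesses h, h, y, x. *)

From mathcomp Require Import all_boot.

Set Implicit Arguments. Unset Strict Implicit. Unset Printing Implicit Defensive.

Lemma eq_set2 (T : finType) (a b c e : T) :
  ([set a; b] == [set c; e]) = (a == c) && (b == e) || (a == e) && (b == c).
Proof.
apply/eqP/idP => [abce | /orP[]/andP[/eqP-> /eqP->] //]; last exact: setUC.
have := set21 a b; have := set22 a b; have := set21 c e; have := set22 c e.
rewrite abce -{1 2}abce !inE.
by do 4!case/orP=> /eqP ?; subst; rewrite ?eqxx ?orbT.
Qed.

Lemma cover_set2 (T : finType) (A B : {set T}) : cover [set A; B] = A :|: B.
Proof.
have [->|nAB] := eqVneq A B; first by rewrite !setUid cover1.
by rewrite /cover big_setU1 ?big_set1 // inE.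
Qed.

Lemma card_incident_set2 (T : finType) (A B : {set T}) i : A != B ->
  #|[set f in [set A; B] | i \in f]| = (i \in A) + (i \in B).
Proof.
move=> nAB; rewrite -sum1dep_card (eq_bigl (fun f => (f \in [set A; B]) && (i \in f))).
  by rewrite big_mkcondr big_setU1 ?big_set1 ?inE //=; case: (i \in A).
by move=> f; rewrite inE.
Qed.

Lemma exists_notin_seq (T : finType) (A : {pred T}) (s : seq T) :
  size s < #|A| -> exists2 x, x \in A & x \notin s.
Proof.
move=> lt_s_A; apply/subsetPn/negP => /subset_leq_card le_A_s.
by move: (leq_trans le_A_s (card_size s)); rewrite leqNgt lt_s_A.
Qed.

Lemma disjoint_set2 (T : finType) (a b c e : T) :
  a != c -> a != e -> b != c -> b != e -> [disjoint [set a; b] & [set c; e]].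
Proof.
move=> ac ae bc be; apply/pred0P => z /=; rewrite !inE.
by apply/negP => /andP[/orP[]/eqP-> /orP[]/eqP eq_z]; rewrite eq_z eqxx in ac ae bc be.
Qed.

Lemma trivIset_set2 (T : finType) (A B : {set T}) :
  [disjoint A & B] -> trivIset [set A; B].
Proof.
move=> dAB; apply/trivIsetP => X Y; rewrite !inE.
by move=> /orP[]/eqP-> /orP[]/eqP->; rewrite ?eqxx // disjoint_sym.
Qed.

Lemma cards_disjointU (T : finType) (A B : {set T}) :
  [disjoint A & B] -> #|A :|: B| = #|A| + #|B|.
Proof. by move=> dAB; apply/eqP; rewrite (leq_card_setU A B).2. Qed.

Section Adjacency.
Variables (n : nat) (G : graph n).

Lemma adj_sym u w : adj G u w = adj G w u.
Proof. by rewrite /adj eq_sym setUC. Qed.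

Lemma adj_neq u w : adj G u w -> u != w.
Proof. by case/andP. Qed.

Lemma adj_edge u w : adj G u w -> [set u; w] \in G.
Proof. by case/andP. Qed.

Lemma nonadj_nonedge u w : u != w -> ~~ adj G u w -> [set u; w] \notin G.
Proof. by rewrite /adj => ->. Qed.

Lemma deg_nbrs v : is_simple G -> deg G v = #|[set w | adj G v w]|.
Proof.
move=> simpleG; rewrite /deg -(card_in_imset (f := fun w => [set v; w])
  (D := [set w | adj G v w])).
  apply: eq_card => f; rewrite inE; apply/andP/imsetP => [[Gf vf]|[w]].
    have /cards2P[p [q [pq f_pq]]] : #|f| == 2 by exact: (forall_inP simpleG).
    move: vf Gf; rewrite f_pq !inE => /orP[]/eqP-> Gf.
      by exists q; rewrite // inE /adj pq.
    by exists p; rewrite 1?setUC // inE /adj eq_sym pq setUC.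
  by rewrite inE => /andP[_ Gvw] ->; rewrite set21.
move=> u w; rewrite !inE => /andP[vu _] _ /eqP; rewrite eq_set2 eqxx /=.
by case/orP=> [/eqP //|/andP[_ /eqP uv]]; rewrite uv eqxx in vu.
Qed.

Lemma deg_exchange (F F' : graph n) i : F \subset G -> [disjoint F' & G] ->
  #|[set f in F | i \in f]| = #|[set f in F' | i \in f]| ->
  deg ((G :\: F) :|: F') i = deg G i.
Proof.
move=> sFG dF'G eq_inc; rewrite /deg.
set S := [set f in G | i \in f]; set SF := [set f in F | i \in f].
set SF' := [set f in F' | i \in f].
have -> : [set f in (G :\: F) :|: F' | i \in f] = (S :\: SF) :|: SF'.
  by apply/setP => f; rewrite !inE; case: (i \in f); rewrite ?andbF ?andbT.
have sSF_S : SF \subset S.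
  by apply/subsetP => f; rewrite !inE => /andP[/(subsetP sFG) -> ->].
have dSF' : [disjoint S :\: SF & SF'].
  rewrite disjoint_sym; apply/pred0P => f /=; rewrite !inE.
  by case F'f: (f \in F') => //=; rewrite (disjointFr dF'G F'f) /= !andbF.
rewrite cardsU (disjoint_setI0 dSF') cards0 subn0 cardsD (setIidPr sSF_S) -eq_inc.
by rewrite subnK // subset_leq_card.
Qed.

End Adjacency.

Definition switch n (G : graph n) (a b c e : 'I_n) : graph n :=
  (G :\: [set [set a; b]; [set c; e]]) :|: [set [set a; c]; [set b; e]].

(* A decision procedure for statements about the edges of iterated switches of
   a graph: once the switches are unfolded, such a statement is a boolean
   combination of vertex equalities and of edges of the base graph. *)
Ltac split_conj :=
  repeat match goal with H : is_true (_ && _) |- _ => case/andP: H => ? ? end.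

Ltac neq_facts H :=
  let K := fresh in have K := H; rewrite /= ?inE ?negb_or ?andbT in K; split_conj.

Ltac rewrite_known :=
  repeat match goal with
  | |- context [?u == ?u] => rewrite eqxx
  | H : is_true (?u != ?w) |- context [?u == ?w] => rewrite (negbTE H)
  | H : is_true (?u != ?w) |- context [?w == ?u] => rewrite (eq_sym w u) (negbTE H)
  | H : is_true ([set ?u; ?w] \in ?G) |- context [[set ?u; ?w] \in ?G] => rewrite H
  | H : is_true ([set ?u; ?w] \in ?G) |- context [[set ?w; ?u] \in ?G] =>
      rewrite (setUC [set w] [set u]) H
  | H : is_true ([set ?u; ?w] \notin ?G) |- context [[set ?u; ?w] \in ?G] =>
      rewrite (negbTE H)
  | H : is_true ([set ?u; ?w] \notin ?G) |- context [[set ?w; ?u] \in ?G] =>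
      rewrite (setUC [set w] [set u]) (negbTE H)
  end.

Ltac bool_cases :=
  rewrite /= ?andbT ?andbF ?orbT ?orbF; try done;
  repeat match goal with
         | |- context [?u == ?w] => case: (u == w)
         | |- context [?u \in ?A] => case: (u \in A)
         end; done.

Ltac case_vertex i :=
  repeat match goal with |- context [i == ?w] => case: (eqVneq i w) => [->|?] end.

Ltac unfold_graphs :=
  repeat match goal with X := _ : graph _ |- _ => progress unfold X end.

Ltac decide_edges :=
  unfold_graphs; rewrite /= /adj /switch ?inE ?eq_set2 ?negb_or; rewrite_known; bool_cases.

Section Switch.
Variables (n : nat) (d : 'I_n -> nat) (G : graph n) (a b c e : 'I_n).
Hypotheses (Gd : in_Gnd d G) (abce : uniq [:: a; b; c; e]).
Hypotheses (Gab : [set a; b] \in G) (Gce : [set c; e] \in G)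
  (Gac : [set a; c] \notin G) (Gbe : [set b; e] \notin G).

Let F := [set [set a; b]; [set c; e]].
Let F' := [set [set a; c]; [set b; e]].

Let F_G : F \subset G.
Proof. by apply/subsetP => f; rewrite !inE => /orP[]/eqP->. Qed.

Let F'_G : [disjoint F' & G].
Proof.
apply/pred0P => f /=; rewrite !inE.
by apply/negP => /andP[/orP[]/eqP-> G_f]; [exact: (negP Gac) | exact: (negP Gbe)].
Qed.

Lemma switch_in_Gnd : in_Gnd d (switch G a b c e).
Proof.
neq_facts abce; case: Gd => simpleG degG; split.
  apply/forall_inP => f; rewrite /switch !inE.
  by case/orP=> [/andP[_ /(forall_inP simpleG)] //|/orP[]/eqP->]; rewrite cards2; decide_edges.
move=> i; rewrite -degG deg_exchange // !card_incident_set2 ?inE; try by decide_edges.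
by case_vertex i; decide_edges.
Qed.

Lemma switch_via_switch : switch_via d G (switch G a b c e) F F'.
Proof.
neq_facts abce.
have dF : [disjoint [set a; b] & [set c; e]] by apply: disjoint_set2; decide_edges.
have dF' : [disjoint [set a; c] & [set b; e]] by apply: disjoint_set2; decide_edges.
split => //.
- by split => //; exact: switch_in_Gnd.
- split => //; first by rewrite cards2; decide_edges.
    exact: trivIset_set2.
  by rewrite cover_set2 cards_disjointU // !cards2; decide_edges.
- split.
  + rewrite /partition !cover_set2 setUACA eqxx trivIset_set2 //= !inE.
    by rewrite !(eq_sym set0) -!cards_eq0 !cards2.
  + by apply/forall_inP => f; rewrite !inE => /orP[]/eqP->; rewrite cards2; decide_edges.
  + apply/negP => /eqP F'F; have := set21 [set a; c] [set b; e].
    by rewrite -/F' F'F !inE; decide_edges.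
- by rewrite setDE setIA (disjoint_setI0 F'_G) set0I.
Qed.

Lemma switch_is_triangle_switch v : v \notin [:: a; b; c; e] ->
  [|| adj G a v && adj G b v, adj G c v && adj G e v,
      adj G a v && adj G c v | adj G b v && adj G e v] ->
  is_triangle_switch d G (switch G a b c e).
Proof.
move=> v_abce common_v; exists F, F'; split; first exact: switch_via_switch.
have v_F : v \notin cover F.
  by move: v_abce; rewrite cover_set2 !inE /= !orbA.
suff pair_common p q : [set p; q] \in F :|: F' -> adj G p v -> adj G q v ->
    exists f, f \in F :|: F' /\ exists v, v \notin cover F /\ forall x, x \in f -> adj G x v.
  by case/or4P: common_v => /andP[]; apply: pair_common; rewrite !inE eqxx ?orbT.
move=> pq_FF' pv qv; exists [set p; q]; split => //.
by exists v; split => // x; rewrite !inE => /orP[]/eqP->.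
Qed.

End Switch.

Lemma switch_via_inv n (d : 'I_n -> nat) (G H : graph n) a b c e :
  switch_via d G H [set [set a; b]; [set c; e]] [set [set a; c]; [set b; e]] ->
  [/\ in_Gnd d G, uniq [:: a; b; c; e], [set a; b] \in G /\ [set c; e] \in G,
      [set a; c] \notin G /\ [set b; e] \notin G & H = switch G a b c e].
Proof.
case=> [[Gd _] [sFG _ _ cover4] _ F'GF ->].
have abce : uniq [:: a; b; c; e].
  apply/card_uniqP; rewrite /= -cover4 cover_set2; apply: eq_card => z.
  by rewrite !inE /= !orbA.
have nonedge f : f \in [set [set a; c]; [set b; e]] ->
    f \notin [set [set a; b]; [set c; e]] -> f \notin G.
  move=> F'f Ff; apply/negP => Gf.
  by have := in_set0 f; rewrite -F'GF inE in_setD F'f (negbTE Ff) Gf.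
neq_facts abce; split => //.
  by split; apply: (subsetP sFG); rewrite !inE eqxx ?orbT.
by split; apply: nonedge; rewrite !inE; decide_edges.
Qed.

Section TriangleSwitchPaths.
Variables (n : nat) (d : 'I_n -> nat).

Lemma triangle_switch_in_Gnd (G H : graph n) :
  is_triangle_switch d G H -> in_Gnd d G /\ in_Gnd d H.
Proof. by case=> F [F' [[]]]. Qed.

Lemma tsim_path1 (G H : graph n) : is_triangle_switch d G H -> tsim_path d G H 1.
Proof.
move=> GH; exists (fun i => if i is 0 then G else H); split => //.
  by case=> [|[]] // _; case: (triangle_switch_in_Gnd GH).
by case.
Qed.

Lemma tsim_path_cons (G X H : graph n) k :
  is_triangle_switch d G X -> tsim_path d X H k -> tsim_path d G H k.+1.
Proof.
move=> GX [P [P0 Pk P_Gnd P_sw]].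
exists (fun i => if i is i'.+1 then P i' else G); split => //.
  by case=> [|i] ik; [case: (triangle_switch_in_Gnd GX) | exact: P_Gnd].
by case=> [|i] ik /=; [rewrite P0 | exact: P_sw].
Qed.

End TriangleSwitchPaths.

(* Splitting on [f == [set u; w]] for every switched pair leaves inconsistent
   branches when a pair occurs in both orientations; they are closed by
   refuting a hypothesis [f != [set w; u]] after substitution. *)
Ltac refute_set2_neq :=
  match goal with H : is_true (?P != ?Q) |- _ =>
    move: H; rewrite eq_set2; rewrite_known; rewrite /= ?andbT ?orbT; done
  end.

Ltac decide_graph_eq :=
  unfold_graphs; apply/setP => f; rewrite /switch !inE;
  repeat match goal with
  |- context [?f == ?P] => is_var f; case: (eqVneq f P) => [?|?]; [subst f|]
  end;
  first [ decide_edges | refute_set2_neq ].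

Section FourSwitches.
Variables (n : nat) (d : 'I_n -> nat) (G : graph n) (a1 a2 a3 a4 : 'I_n).
Hypotheses (Gd : in_Gnd d G) (distinct : uniq [:: a1; a2; a3; a4]).
Hypotheses (G12 : [set a1; a2] \in G) (G34 : [set a3; a4] \in G)
  (G13 : [set a1; a3] \notin G) (G24 : [set a2; a4] \notin G).
Local Notation D := [set a1; a2; a3; a4].

Ltac triangle_step v :=
  apply: (switch_is_triangle_switch _ _ _ _ _ _ (v := v));
  first [ exact: Gd | apply: (proj2 (triangle_switch_in_Gnd _)); eassumption | decide_edges ].

Lemma tsim_path_triangle_a1xy x x' y v :
  x \notin D -> x' \notin D -> y \notin D -> uniq [:: x; x'; y] ->
  v \notin [:: a1; x; x'; y] ->
  [set a1; x] \in G -> [set a1; x'] \in G -> [set x; y] \in G -> [set y; v] \in G ->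
  [set a1; y] \notin G -> [set x'; v] \notin G -> [set x; a4] \notin G ->
  tsim_path d G (switch G a1 a2 a3 a4) 4.
Proof.
move=> xD x'D yD xx'y v_new G1x G1x' Gxy Gyv G1y Gx'v Gx4.
neq_facts distinct; neq_facts xD; neq_facts x'D; neq_facts yD; neq_facts xx'y; neq_facts v_new.
pose X1 := switch G a1 x' y v.
pose X2 := switch X1 a1 x a3 a4.
pose X3 := switch X2 a1 a2 x a4.
have s1 : is_triangle_switch d G X1 by triangle_step x.
have s2 : is_triangle_switch d X1 X2 by triangle_step y.
have s3 : is_triangle_switch d X2 X3 by triangle_step y.
have s4 : is_triangle_switch d X3 (switch X3 a1 y x' v) by triangle_step x.
have -> : switch G a1 a2 a3 a4 = switch X3 a1 y x' v by decide_graph_eq.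
exact: tsim_path_cons s1 (tsim_path_cons s2 (tsim_path_cons s3 (tsim_path1 s4))).
Qed.

Lemma tsim_path_triangle_xth x y t h :
  x \notin D -> y \notin D -> h \notin D -> uniq [:: x; y; h] ->
  t \notin [:: a1; a3; a4; x; y; h] ->
  [set a1; x] \in G -> [set x; y] \in G -> [set y; t] \in G ->
  [set x; h] \in G -> [set t; h] \in G ->
  [set a1; y] \notin G -> [set x; t] \notin G -> [set a3; t] \notin G ->
  [set x; a4] \notin G ->
  tsim_path d G (switch G a1 a2 a3 a4) 4.
Proof.
move=> xD yD hD xyh t_new G1x Gxy Gyt Gxh Gth G1y Gxt G3t Gx4.
neq_facts distinct; neq_facts xD; neq_facts yD; neq_facts hD; neq_facts xyh; neq_facts t_new.
pose X1 := switch G a1 x y t.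
pose X2 := switch X1 a4 a3 x t.
pose X3 := switch X2 a1 a2 x a4.
have s1 : is_triangle_switch d G X1 by triangle_step h.
have s2 : is_triangle_switch d X1 X2 by triangle_step h.
have s3 : is_triangle_switch d X2 X3 by triangle_step y.
have s4 : is_triangle_switch d X3 (switch X3 a1 y a3 t) by triangle_step x.
have -> : switch G a1 a2 a3 a4 = switch X3 a1 y a3 t by decide_graph_eq.
exact: tsim_path_cons s1 (tsim_path_cons s2 (tsim_path_cons s3 (tsim_path1 s4))).
Qed.

Section Anchored.
Hypothesis not_adj14 : ~~ adj G a1 a4.
Hypothesis no_common_nbr : forall x y w, x \in D -> y \in D ->
  x != y -> ~ (adj G x w /\ adj G y w).
Hypothesis no_triangle : forall j u w, j \in D -> u \notin D -> w \notin D ->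
  ~ [/\ adj G j u, adj G j w & adj G u w].
Hypothesis deg_ge3 : forall u, 3 <= d u.

Lemma exists_nbr u (s : seq 'I_n) : size s < 3 -> exists2 w, adj G u w & w \notin s.
Proof.
case: Gd => simpleG degG s3.
have [|w] := exists_notin_seq (A := [set w | adj G u w]) (s := s).
  by rewrite -deg_nbrs // degG (leq_trans s3).
by rewrite inE; exists w.
Qed.

Lemma nbr_a1_notin_D u : adj G a1 u -> u != a2 -> u \notin D.
Proof.
move=> a1u u2; rewrite !inE !negb_or eq_sym (adj_neq a1u) u2 /=.
by apply/andP; split; [apply: contraNneq G13 => <-; exact: adj_edge | apply: contraNneq not_adj14 => <-].
Qed.

Lemma second_nbr_a1 u w : adj G a1 u -> u != a2 -> adj G u w -> w != a1 ->
  (w \notin D) && ~~ adj G a1 w.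
Proof.
move=> a1u u2 uw w1; have uD := nbr_a1_notin_D a1u u2.
have wD : w \notin D.
  apply/negP => wD; apply: (no_common_nbr (x := a1) (y := w) (w := u)) => //.
  - by rewrite !inE eqxx.
  - by rewrite eq_sym.
  - by split; rewrite // adj_sym.
rewrite wD; apply/negP => a1w.
by apply: (no_triangle (j := a1) (u := u) (w := w)) => //; rewrite !inE eqxx.
Qed.

Lemma nbr_a1_nonadj_D u w : adj G a1 u -> u != a2 -> w \in D -> w != a1 -> ~~ adj G u w.
Proof.
move=> a1u u2 wD w1; apply/negP => uw.
by have /andP[] := second_nbr_a1 a1u u2 uw w1; rewrite wD.
Qed.

Lemma nbr_a1_nonedge_a4 u : adj G a1 u -> u != a2 -> [set u; a4] \notin G.
Proof.
move=> a1u u2; have a4D : a4 \in D by rewrite !inE eqxx !orbT.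
apply: nonadj_nonedge; first by apply: contraNneq (nbr_a1_notin_D a1u u2) => ->.
by neq_facts distinct; apply: (nbr_a1_nonadj_D a1u u2 a4D); rewrite eq_sym.
Qed.

Lemma nbrs_a1_nonadj u w : adj G a1 u -> adj G a1 w -> u != a2 -> ~~ adj G u w.
Proof.
move=> a1u a1w u2; apply/negP => uw.
have w1 : w != a1 by rewrite eq_sym (adj_neq a1w).
by have /andP[_] := second_nbr_a1 a1u u2 uw w1; rewrite a1w.
Qed.

Lemma tsim_path_of_4cycle x y t h :
  adj G a1 x -> x != a2 -> adj G x y -> y != a1 -> adj G y t -> t \notin D ->
  t != x -> ~~ adj G x t -> ~~ adj G a3 t -> adj G x h -> adj G t h ->
  h != a1 -> h != y ->
  tsim_path d G (switch G a1 a2 a3 a4) 4.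
Proof.
move=> a1x x2 xy y1 yt tD tx xt a3t xh th h1 hy.
have /andP[yD a1y] := second_nbr_a1 a1x x2 xy y1.
have /andP[hD _] := second_nbr_a1 a1x x2 xh h1.
have [t1 t3 t4] : [/\ t != a1, t != a3 & t != a4].
  by move: tD; rewrite !inE !negb_or => /andP[/andP[/andP[-> _] ->] ->].
apply: (tsim_path_triangle_xth (x := x) (y := y) (t := t) (h := h)).
- exact: nbr_a1_notin_D.
- exact: yD.
- exact: hD.
- by rewrite /= !inE negb_or (adj_neq xy) (adj_neq xh) eq_sym hy.
- by rewrite /= !inE !negb_or t1 t3 t4 tx (eq_sym t y) (adj_neq yt) (adj_neq th).
- exact: adj_edge a1x.
- exact: adj_edge xy.
- exact: adj_edge yt.
- exact: adj_edge xh.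
- exact: adj_edge th.
- by apply: nonadj_nonedge; rewrite // eq_sym.
- by apply: nonadj_nonedge; rewrite // eq_sym.
- by apply: nonadj_nonedge; rewrite // eq_sym.
- exact: nbr_a1_nonedge_a4.
Qed.

Definition reroutable x x' := [exists y, exists v,
  [&& adj G x y, y != a1, adj G y v, v != x, v != x' & ~~ adj G x' v]].

Lemma not_reroutable_adj x x' y v : ~~ reroutable x x' ->
  adj G x y -> y != a1 -> adj G y v -> v != x -> v != x' -> adj G x' v.
Proof.
move=> /existsPn/(_ y)/existsPn/(_ v) no_yv xy y1 yv vx vx'.
by apply/negPn; apply: contra no_yv => x'v; rewrite xy y1 yv vx vx'.
Qed.

Lemma tsim_path_of_reroutable x x' :
  adj G a1 x -> adj G a1 x' -> x != a2 -> x' != a2 -> x != x' -> reroutable x x' ->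
  tsim_path d G (switch G a1 a2 a3 a4) 4.
Proof.
move=> a1x a1x' x2 x'2 xx' /existsP[y /existsP[v /and5P[xy y1 yv vx /andP[vx' x'v]]]].
have /andP[yD a1y] := second_nbr_a1 a1x x2 xy y1.
have yx' : y != x' by apply: contraNneq a1y => ->.
have v1 : v != a1 by apply: contraNneq a1y => <-; rewrite adj_sym.
apply: (tsim_path_triangle_a1xy (x := x) (x' := x') (y := y) (v := v)).
- exact: nbr_a1_notin_D.
- exact: nbr_a1_notin_D.
- exact: yD.
- by rewrite /= !inE negb_or xx' (adj_neq xy) eq_sym yx'.
- by rewrite /= !inE !negb_or v1 vx vx' eq_sym (adj_neq yv).
- exact: adj_edge a1x.
- exact: adj_edge a1x'.
- exact: adj_edge xy.
- exact: adj_edge yv.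
- by apply: nonadj_nonedge; rewrite // eq_sym.
- by apply: nonadj_nonedge; rewrite // eq_sym.
- exact: nbr_a1_nonedge_a4.
Qed.

Lemma tsim_path_of_unreroutable x x' :
  adj G a1 x -> adj G a1 x' -> x != a2 -> x' != a2 -> x != x' ->
  ~~ reroutable x x' -> ~~ reroutable x' x -> tsim_path d G (switch G a1 a2 a3 a4) 4.
Proof.
move=> a1x a1x' x2 x'2 xx' /not_reroutable_adj Nx /not_reroutable_adj Nx'.
have [y xy] := exists_nbr x (s := [:: a1]) isT; rewrite !inE => y1.
have /andP[_ a1y] := second_nbr_a1 a1x x2 xy y1.
have yx' : y != x' by apply: contraNneq a1y => ->.
have [t yt] := exists_nbr y (s := [:: x; x']) isT; rewrite !inE negb_or => /andP[tx tx'].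
have t1 : t != a1 by apply: contraNneq a1y => <-; rewrite adj_sym.
have x't : adj G x' t := Nx y t xy y1 yt tx tx'.
have /andP[tD a1t] := second_nbr_a1 a1x' x'2 x't t1.
have [x'D a3D] : x' \notin D /\ a3 \in D by rewrite nbr_a1_notin_D // !inE eqxx !orbT.
have a31 : a3 != a1 by rewrite eq_sym; neq_facts distinct.
have [xt | xt] := boolP (adj G x t).
  have yx'_adj : adj G y x'.
    rewrite adj_sym; apply: (Nx t y xt t1) => //; first by rewrite adj_sym.
    by rewrite eq_sym (adj_neq xy).
  apply: (tsim_path_of_4cycle (x := x) (y := y) (t := x') (h := t)) => //.
  - by rewrite eq_sym.
  - exact: nbrs_a1_nonadj.
  - by rewrite adj_sym; apply: nbr_a1_nonadj_D.
  - by rewrite eq_sym (adj_neq yt).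
have [h th] := exists_nbr t (s := [:: x'; y]) isT; rewrite !inE negb_or => /andP[hx' hy].
have hx : h != x by apply: contraNneq xt => <-; rewrite adj_sym.
have xh : adj G x h := Nx' t h x't t1 th hx' hx.
have a3t : ~~ adj G a3 t.
  apply: contraNN (nbr_a1_nonadj_D a1x x2 a3D a31) => a3t.
  apply: (Nx' t a3 x't t1); first by rewrite adj_sym.
    by apply: contraNneq x'D => <-.
  by apply: contraNneq (nbr_a1_notin_D a1x x2) => <-.
have h1 : h != a1 by apply: contraNneq a1t => <-; rewrite adj_sym.
exact: (tsim_path_of_4cycle (x := x) (y := y) (t := t) (h := h)).
Qed.

Lemma tsim_path_switch4 : tsim_path d G (switch G a1 a2 a3 a4) 4.
Proof.
have [x a1x] := exists_nbr a1 (s := [:: a2]) isT; rewrite !inE => x2.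
have [x' a1x'] := exists_nbr a1 (s := [:: a2; x]) isT.
rewrite !inE negb_or => /andP[x'2 x'x]; have xx' : x != x' by rewrite eq_sym.
have [|Nxx'] := boolP (reroutable x x'); first exact: tsim_path_of_reroutable.
have [|Nx'x] := boolP (reroutable x' x).
  exact: (tsim_path_of_reroutable (x := x') (x' := x)).
exact: (tsim_path_of_unreroutable (x := x) (x' := x')).
Qed.

End Anchored.

End FourSwitches.

Theorem lemma3 (n : nat) (d : 'I_n -> nat) (G H : graph n)
    (a1 a2 a3 a4 : 'I_n) :
  graphical d ->
  (forall i, 3 <= d i) ->
  switch_via d G H [set [set a1; a2]; [set a3; a4]]
                   [set [set a1; a3]; [set a2; a4]] ->
  ~~ adj G a1 a4 -> ~~ adj G a2 a3 ->
  (forall x y w, x \in [set a1; a2; a3; a4] -> y \in [set a1; a2; a3; a4] ->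
     x != y -> ~ (adj G x w /\ adj G y w)) ->
  (forall j u w, j \in [set a1; a2; a3; a4] ->
     u \notin [set a1; a2; a3; a4] -> w \notin [set a1; a2; a3; a4] ->
     ~ [/\ adj G j u, adj G j w & adj G u w]) ->
  exists kappa, kappa <= 5 /\ tsim_path d G H kappa.
Proof.
move=> _ deg_ge3 /switch_via_inv[Gd distinct [G12 G34] [G13 G24] ->] not_adj14 _.
move=> no_common_nbr no_triangle; exists 4; split => //.
exact: tsim_path_switch4.
Qed.
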